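(* Let $A_1,A_2$ be bounded operators on a Hilbert space $\mathcal H$. The following are equivalent: (1) $(A_1,A_2)$ is almost normal; (2) $A_1^*+A_2z$ and $A_2^*+A_1z$ commute for every $z\in\mathbb T$; (3) $A_2^*+A_1z$ is normal for every $z\in\mathbb T$; (4) $A_1^*+A_2z$ is normal for every $z\in\mathbb T$.
   Context: A pair $(A_1,A_2)$ is almost normal if $A_1A_2=A_2A_1$ and $A_1^*A_1-A_1A_1^*=A_2^*A_2-A_2A_2^*$. *)

From mathcomp Require Import all_boot all_algebra.
From mathcomp Require Import complex reals.
Set Implicit Arguments. Unset Strict Implicit. Unset Printing Implicit Defensive.
Import GRing.Theory Num.Theory.
Local Open Scope ring_scope.
Local Open Scope complex_scope.

Definition is_inner_product (R : realType) (H : lmodType R[i])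
  (ip : H -> H -> R[i]) : Prop :=
  [/\ (forall (a : R[i]) (x y z : H), ip (a *: x + y) z = a * ip x z + ip y z),
      (forall x y : H, ip y x = (ip x y)^*),
      (forall x : H, 0 <= ip x x)
    & (forall x : H, ip x x = 0 -> x = 0)].

(* Completeness w.r.t. the norm ||x|| = sqrt (ip x x)
   (stated with squared norms). *)
Definition ip_complete (R : realType) (H : lmodType R[i])
  (ip : H -> H -> R[i]) : Prop :=
  forall u : nat -> H,
    (forall e : R[i], 0 < e -> exists N : nat, forall m n : nat,
        (N <= m)%N -> (N <= n)%N -> ip (u m - u n) (u m - u n) < e) ->
    exists l : H, forall e : R[i], 0 < e -> exists N : nat, forall n : nat,
        (N <= n)%N -> ip (u n - l) (u n - l) < e.

Definition is_hilbert (R : realType) (H : lmodType R[i])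
  (ip : H -> H -> R[i]) : Prop :=
  is_inner_product ip /\ ip_complete ip.

Definition bounded_op (R : realType) (H : lmodType R[i])
  (ip : H -> H -> R[i]) (A : H -> H) : Prop :=
  linear A /\ exists M : R, forall x : H, ip (A x) (A x) <= M%:C * ip x x.

Definition is_adjoint (R : realType) (H : lmodType R[i])
  (ip : H -> H -> R[i]) (A B : H -> H) : Prop :=
  forall x y : H, ip (A x) y = ip x (B y).

Definition op_commute (R : realType) (H : lmodType R[i]) (S T : H -> H) : Prop :=
  forall x : H, S (T x) = T (S x).

Definition normal_op (R : realType) (H : lmodType R[i])
  (ip : H -> H -> R[i]) (T : H -> H) : Prop :=
  exists Ts : H -> H, is_adjoint ip T Ts /\ op_commute T Ts.

(* (A1, A2) almost normal, A1s, A2s being the adjoints of A1, A2. *)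
Definition almost_normal (R : realType) (H : lmodType R[i])
  (A1 A1s A2 A2s : H -> H) : Prop :=
  op_commute A1 A2 /\
  forall x : H, A1s (A1 x) - A1 (A1s x) = A2s (A2 x) - A2 (A2s x).

(* For |z| = 1 put S_z = A1^* + z A2 and T_z = A2^* + z A1. Their adjoints are
   T_z^* = conj z S_z and S_z^* = conj z T_z, so normality of T_z, normality of S_z
   and commutation of S_z with T_z are one and the same condition. Expanding,
   S_z T_z - T_z S_z = [A1^*, A2^*] + z ([A1^*, A1] - [A2^*, A2]) + z^2 [A2, A1],
   a quadratic polynomial in z; it vanishes on the unit circle iff its three
   coefficients vanish, and the last two coefficients vanish exactly when (A1, A2)
   is almost normal (the first one then vanishes as well, by taking adjoints). *)
From HB Require Import structures.
From mathcomp Require Import all_boot all_algebra.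
From mathcomp Require Import complex reals.
From mathcomp Require Import ring.
Set Implicit Arguments.
Unset Strict Implicit.
Unset Printing Implicit Defensive.
Import GRing.Theory Num.Theory.
Local Open Scope ring_scope.
Local Open Scope complex_scope.

Lemma quadratic_roots_eq0 (F : idomainType) (rs : seq F) (c0 c1 c2 : F) :
  uniq rs -> (2 < size rs)%N ->
  {in rs, forall z, c0 + z * c1 + z ^+ 2 * c2 = 0} ->
  [/\ c0 = 0, c1 = 0 & c2 = 0].
Proof.
move=> rs_uniq rs_large rs_roots.
have p0 : Poly [:: c0; c1; c2] = 0.
  apply: (roots_geq_poly_eq0 _ rs_uniq); last exact: leq_trans (size_Poly _) _.
  apply/allP => z /rs_roots root_z; apply/eqP.
  by rewrite horner_Poly -[RHS]root_z /=; ring.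
by split; [move: (coef_Poly [:: c0; c1; c2] 0) | move: (coef_Poly [:: c0; c1; c2] 1)
  | move: (coef_Poly [:: c0; c1; c2] 2)]; rewrite p0 coef0.
Qed.

Lemma unit_circle_quadratic_eq0 (C : numClosedFieldType) (c0 c1 c2 : C) :
  (forall z, `|z| = 1 -> c0 + z * c1 + z ^+ 2 * c2 = 0) ->
  [/\ c0 = 0, c1 = 0 & c2 = 0].
Proof.
move=> circle_roots; apply: (@quadratic_roots_eq0 _ [:: 1; -1; 'i%R]) => //.
- have one_neq_m1 : (1 : C) != -1 by rewrite -addr_eq0 -(natrD _ 1 1) pnatr_eq0.
  have one_neq_i : (1 : C) != 'i%R.
    by apply: contraNneq one_neq_m1 => i_eq; rewrite -sqrCi -i_eq expr1n.
  have m1_neq_i : (-1 : C) != 'i%R.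
    by apply: contraNneq one_neq_m1 => i_eq; rewrite -sqrCi -i_eq sqrrN expr1n.
  by rewrite /= !inE negb_or one_neq_m1 one_neq_i m1_neq_i.
- by move=> z; rewrite !inE => /or3P[] /eqP->; apply: circle_roots;
    rewrite ?normrN ?normr1 ?normCi.
Qed.

Lemma op_commute_sym (R : realType) (V : lmodType R[i]) (S T : V -> V) :
  op_commute S T -> op_commute T S.
Proof. by move=> ST x; rewrite ST. Qed.

Lemma op_commute_scaler (R : realType) (V : lmodType R[i]) (T S : V -> V) c :
  c != 0 -> scalable T ->
  op_commute T (fun x => c *: S x) <-> op_commute T S.
Proof.
move=> c_neq0 T_scalable; split=> TS x; last by rewrite T_scalable TS.
by apply: (scalerI c_neq0); rewrite -T_scalable TS.
Qed.

Section InnerProduct.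
Variables (R : realType) (H : lmodType R[i]) (ip : H -> H -> R[i]).
Hypothesis ip_inner : is_inner_product ip.

Let ip_scalar z : scalar (ip^~ z).
Proof. by case: ip_inner => ip_lin _ _ _ a x y; apply: ip_lin. Qed.

Lemma ipDl x y z : ip (x + y) z = ip x z + ip y z.
Proof. exact: (GRing.semilinear_linear (ip_scalar z)).2. Qed.

Lemma ipBl x y z : ip (x - y) z = ip x z - ip y z.
Proof. exact: zmod_morphism_linear (ip_scalar z) x y. Qed.

Lemma ipZl a x z : ip (a *: x) z = a * ip x z.
Proof. exact: scalable_linear (ip_scalar z) a x. Qed.

Lemma ip0l z : ip 0 z = 0.
Proof. by rewrite -(subrr (0 : H)) ipBl subrr. Qed.

Lemma ipNl x z : ip (- x) z = - ip x z.
Proof. by rewrite -sub0r ipBl ip0l sub0r. Qed.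

Lemma ipC x y : ip y x = (ip x y)^*.
Proof. by case: ip_inner. Qed.

Lemma ipDr x y z : ip x (y + z) = ip x y + ip x z.
Proof. by rewrite ipC ipDl rmorphD /= -!ipC. Qed.

Lemma ipZr a x y : ip x (a *: y) = a^* * ip x y.
Proof. by rewrite ipC ipZl rmorphM /= -ipC. Qed.

Lemma ip_eqL u v : (forall w, ip u w = ip v w) -> u = v.
Proof.
case: ip_inner => _ _ _ ip_definite eq_uv; apply/subr0_eq/ip_definite.
by rewrite ipBl eq_uv subrr.
Qed.

Lemma unit_circle_quadratic_vec_eq0 (c0 c1 c2 : H) :
  (forall z, `|z| = 1 -> c0 + z *: c1 + z ^+ 2 *: c2 = 0) ->
  [/\ c0 = 0, c1 = 0 & c2 = 0].
Proof.
move=> circle_roots.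
have coefs_eq0 w : [/\ ip c0 w = 0, ip c1 w = 0 & ip c2 w = 0].
  apply: unit_circle_quadratic_eq0 => z /circle_roots/(congr1 (ip^~ w)).
  by rewrite !ipDl !ipZl ip0l.
by split; apply: ip_eqL => w; rewrite ip0l; case: (coefs_eq0 w).
Qed.

Lemma adjoint_sym A B : is_adjoint ip A B -> is_adjoint ip B A.
Proof. by move=> AB x y; rewrite ipC -AB -ipC. Qed.

Lemma adjoint_linear A B : is_adjoint ip A B -> linear A.
Proof. by move=> AB a u v; apply: ip_eqL => w; rewrite AB !ipDl !ipZl !AB. Qed.

Lemma adjoint_unique A B B' : is_adjoint ip A B -> is_adjoint ip A B' -> B =1 B'.
Proof.
move=> /adjoint_sym AB /adjoint_sym AB' x; apply: ip_eqL => w.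
by rewrite AB AB'.
Qed.

Lemma adjoint_commute A B As Bs : is_adjoint ip A As -> is_adjoint ip B Bs ->
  op_commute A B -> op_commute As Bs.
Proof.
move=> /adjoint_sym AAs /adjoint_sym BBs AB x; apply: ip_eqL => w.
by rewrite AAs BBs BBs AAs AB.
Qed.

Lemma normal_opE T Ts : is_adjoint ip T Ts -> normal_op ip T <-> op_commute T Ts.
Proof.
move=> TTs; split=> [[Ts' [TTs' TTs'_comm]] x | ?]; last by exists Ts.
by rewrite !(adjoint_unique TTs TTs'); exact: TTs'_comm.
Qed.

Section Pencil.
Variables (A As B Bs : H -> H).
Hypotheses (AAs : is_adjoint ip A As) (BBs : is_adjoint ip B Bs).

HB.instance Definition _ := GRing.isLinear.Build R[i] H H *:%R As
  (adjoint_linear (adjoint_sym AAs)).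
HB.instance Definition _ := GRing.isLinear.Build R[i] H H *:%R B
  (adjoint_linear BBs).

Variables (z : R[i]) (z_unit : `|z| = 1).

Lemma adjoint_pencil_unit :
  is_adjoint ip (fun x => As x + z *: B x) (fun x => z^* *: (Bs x + z *: A x)).
Proof.
have z_conjK : z * z^* = 1 by rewrite -normCK z_unit expr1n.
move=> x y; rewrite ipDl ipZl ipZr ipDr ipZr conjCK (adjoint_sym AAs) BBs.
by rewrite mulrDr mulrA z_conjK mul1r addrC.
Qed.

Lemma normal_pencilE :
  normal_op ip (fun x => As x + z *: B x) <->
  op_commute (fun x => As x + z *: B x) (fun x => Bs x + z *: A x).
Proof.
rewrite (normal_opE adjoint_pencil_unit); apply: op_commute_scaler.
  by rewrite conjC_eq0 -normr_eq0 z_unit oner_neq0.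
by move=> c v /=; rewrite (linearZZ As) (linearZZ B) scalerDr !scalerA [z * c]mulrC.
Qed.

End Pencil.

Section AlmostNormal.
Variables (A1 A2 A1s A2s : H -> H).
Hypotheses (A1A1s : is_adjoint ip A1 A1s) (A2A2s : is_adjoint ip A2 A2s).

HB.instance Definition _ := GRing.isLinear.Build R[i] H H *:%R A1
  (adjoint_linear A1A1s).
HB.instance Definition _ := GRing.isLinear.Build R[i] H H *:%R A2
  (adjoint_linear A2A2s).
HB.instance Definition _ := GRing.isLinear.Build R[i] H H *:%R A1s
  (adjoint_linear (adjoint_sym A1A1s)).
HB.instance Definition _ := GRing.isLinear.Build R[i] H H *:%R A2s
  (adjoint_linear (adjoint_sym A2A2s)).

Lemma pencil_commutator z x :
  (A1s (A2s x + z *: A1 x) + z *: A2 (A2s x + z *: A1 x)) -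
  (A2s (A1s x + z *: A2 x) + z *: A1 (A1s x + z *: A2 x)) =
  (A1s (A2s x) - A2s (A1s x)) +
  z *: ((A1s (A1 x) - A1 (A1s x)) - (A2s (A2 x) - A2 (A2s x))) +
  z ^+ 2 *: (A2 (A1 x) - A1 (A2 x)).
Proof.
apply: ip_eqL => w.
rewrite !(linearD A1, linearD A2, linearD A1s, linearD A2s).
rewrite !(linearZZ A1, linearZZ A2, linearZZ A1s, linearZZ A2s).
by rewrite !(ipDl, ipNl, ipZl); ring.
Qed.

Lemma almost_normalE :
  almost_normal A1 A1s A2 A2s <->
  forall z, `|z| = 1 ->
    op_commute (fun x => A1s x + z *: A2 x) (fun x => A2s x + z *: A1 x).
Proof.
split=> [[A1A2 self_comm] z _ x | pencil_comm].
  apply/subr0_eq; rewrite pencil_commutator.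
  rewrite (adjoint_commute A1A1s A2A2s A1A2) self_comm A1A2.
  by rewrite !subrr !scaler0 !addr0.
have coefs_eq0 x :
    [/\ A1s (A2s x) - A2s (A1s x) = 0,
        (A1s (A1 x) - A1 (A1s x)) - (A2s (A2 x) - A2 (A2s x)) = 0
      & A2 (A1 x) - A1 (A2 x) = 0].
  apply: unit_circle_quadratic_vec_eq0 => z z_unit.
  by rewrite -pencil_commutator (pencil_comm z z_unit x) subrr.
split=> x; have [_ /subr0_eq self_comm /subr0_eq A2A1] := coefs_eq0 x.
  exact: esym.
exact: self_comm.
Qed.

End AlmostNormal.

End InnerProduct.

Theorem lemma4p7 (R : realType) (H : lmodType R[i]) (ip : H -> H -> R[i])
  (hH : is_hilbert ip) (A1 A2 A1s A2s : H -> H)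
  (hA1 : bounded_op ip A1) (hA2 : bounded_op ip A2)
  (hA1s : is_adjoint ip A1 A1s) (hA2s : is_adjoint ip A2 A2s) :
  [<-> almost_normal A1 A1s A2 A2s;
       forall z : R[i], `|z| = 1 ->
         op_commute (fun x => A1s x + z *: A2 x) (fun x => A2s x + z *: A1 x);
       forall z : R[i], `|z| = 1 -> normal_op ip (fun x => A2s x + z *: A1 x);
       forall z : R[i], `|z| = 1 -> normal_op ip (fun x => A1s x + z *: A2 x)].
Proof.
have [ip_inner _] := hH.
have normal_T z (z_unit : `|z| = 1) := normal_pencilE ip_inner hA2s hA1s z_unit.
have normal_S z (z_unit : `|z| = 1) := normal_pencilE ip_inner hA1s hA2s z_unit.
tfae=> [pencil z z_unit | pencil z z_unit | normal_Ts z z_unit | normal_Ss].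
- exact: (almost_normalE ip_inner hA1s hA2s).1 pencil z z_unit.
- exact/(normal_T z z_unit)/op_commute_sym/pencil.
- exact/(normal_S z z_unit)/op_commute_sym/(normal_T z z_unit)/normal_Ts.
- apply/(almost_normalE ip_inner hA1s hA2s) => z z_unit.
  exact/(normal_S z z_unit)/normal_Ss.
Qed.
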